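(* Let $u\in L_{\mathrm{up}}$ and $\ell\in F_u$. Then $P_{u,\ell}$ is nonempty and is the edge set of a path.
   Context: Let $(G=(V,E),L,w)$ be a WTAP instance (spanning tree $G$, links $L\subseteq\binom V2$, weights $w>0$) with a fixed root $r\in V$, and let $F\subseteq L$ be a WTAP solution, i.e. $\bigcup_{\ell\in F}P_\ell=E$, where $P_\ell$ is the edge set of the tree path between the endpoints of $\ell$ and $V_\ell$ its vertex set. Ancestors of $v$ are the vertices on the $r$-$v$ path in $G$ (including $r$ and $v$); descendants are defined reciprocally. $\mathrm{apex}(\ell)$ is the vertex of $V_\ell$ closest to $r$. An up-link is a link $\{t,b\}$ with $t$ an ancestor of $b$; $L_{\mathrm{up}}$ is the set of up-links. For $v\in V$ let $B_v=\{\ell\in F\colon \mathrm{apex}(\ell)\text{ is a descendant of }v\}$. For an up-link $u=\{t,b\}$ with $t$ an ancestor of $b$, let $v_u$ be the ancestor of $t$ farthest from $r$ such that $P_u\subseteq\bigcup_{\ell\in B_{v_u}}P_\ell$, and fix $F_u\subseteq B_{v_u}$ inclusion-wise minimal with $P_u\subseteq\bigcup_{\ell\in F_u}P_\ell$. For $\ell\in F_u$ let $P_{u,\ell}=P_u\setminus\bigcup_{\bar\ell\in F_u\setminus\{\ell\}}P_{\bar\ell}$. *)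

From HB Require Import structures.
From mathcomp Require Import all_boot all_order all_algebra.
From mathcomp Require Import boolp.
Set Implicit Arguments. Unset Strict Implicit. Unset Printing Implicit Defensive.

Section WTAP.
Variable V : finType.
Variable adj : rel V.

Definition edgesG : {set {set V}} :=
  [set e | `[< exists x y, adj x y /\ e = [set x; y] >]].

Definition spath (x : V) (p : seq V) : bool := path adj x p && uniq (x :: p).

Definition pedges (x : V) (p : seq V) : {set {set V}} :=
  [set:: [seq [set a.1; a.2] | a <- zip (x :: p) p]].
Definition pverts (x : V) (p : seq V) : {set V} := [set:: x :: p].

(* G is a tree: connected and without cycles (of length >= 3). *)
Definition is_tree : Prop :=
  (forall x y, connect adj x y) /\
  (forall x p, 2 <= size p -> spath x p -> ~~ adj (last x p) x).

Definition tpath_edges (x y : V) : {set {set V}} :=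
  [set e | `[< exists p, spath x p /\ last x p = y /\ e \in pedges x p >]].
Definition tpath_verts (x y : V) : {set V} :=
  [set z | `[< exists p, spath x p /\ last x p = y /\ z \in pverts x p >]].

Definition Pl (l : {set V}) : {set {set V}} :=
  [set e | `[< exists a b, a != b /\ l = [set a; b] /\ e \in tpath_edges a b >]].
Definition Vl (l : {set V}) : {set V} :=
  [set z | `[< exists a b, a != b /\ l = [set a; b] /\ z \in tpath_verts a b >]].

Definition coverL (S : {set {set V}}) : {set {set V}} := \bigcup_(l in S) Pl l.

Variable r : V.

Definition dist (v : V) : nat := #|tpath_edges r v|.
Definition anc (a v : V) : bool := a \in tpath_verts r v.

Definition is_apex (l : {set V}) (a : V) : bool :=
  (a \in Vl l) && [forall x in Vl l, dist a <= dist x].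

Definition Bset (F : {set {set V}}) (v : V) : {set {set V}} :=
  [set l in F | [exists a, is_apex l a && anc v a]].

Definition is_uplink (u : {set V}) (t b : V) : Prop :=
  t != b /\ u = [set t; b] /\ anc t b.

Definition Pul (Fu : {set {set V}}) (u l : {set V}) : {set {set V}} :=
  Pl u :\: \bigcup_(l' in Fu :\ l) Pl l'.

End WTAP.

From mathcomp Require Import all_boot all_order all_algebra.
From mathcomp Require Import boolp.
Set Implicit Arguments. Unset Strict Implicit. Unset Printing Implicit Defensive.

(* Number the edges of the tree path P_u consecutively. Since the path between
   two vertices of a tree path is a subpath of it, each P_l' meets P_u in an
   interval of indices, and by minimality of F_u no such interval is contained
   in another one. If an edge lying between two edges private to l were covered
   by some l' <> l, the interval of l' would avoid both of them, hence lie
   inside the interval of l. So the edges private to l form an interval, which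
   is nonempty by minimality, i.e. they form a subpath of P_u. *)

Definition convex_nat (A : pred nat) :=
  forall i k j, i < k < j -> A i -> A j -> A k.

Lemma convex_nat_interval (A : pred nat) n :
  convex_nat A -> (forall k, A k -> k < n) -> (exists k, A k) ->
  exists lo hi, [/\ lo <= hi, hi < n & forall k, A k = (lo <= k <= hi)].
Proof.
move=> convA boundA exA.
have [lo Alo lo_min] := ex_minnP exA.
have [hi Ahi hi_max] := ex_maxnP exA (fun k Ak => ltnW (boundA k Ak)).
exists lo, hi; split=> [||k]; [exact: lo_min | exact: boundA |].
apply/idP/andP => [Ak | [lo_k k_hi]]; first by rewrite lo_min ?hi_max.
move: lo_k k_hi; rewrite [lo <= k]leq_eqVlt [k <= hi]leq_eqVlt.
move=> /predU1P[<-//|lo_k] /predU1P[->//|k_hi].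
by apply: (convA lo k hi) => //; rewrite lo_k.
Qed.

Section PrivatePart.
Variables (J : finType) (S : {set J}) (n : nat) (I : J -> pred nat).
Hypothesis I_convex : forall j, j \in S -> convex_nat (I j).
Hypothesis I_cover : forall k, k < n -> exists2 j, j \in S & I j k.
Hypothesis I_irredundant :
  forall j j', j \in S -> j' \in S -> j != j' -> ~ {subset I j' <= I j}.

Definition private_part (j : J) : pred nat :=
  fun k => (k < n) && [forall j' in S :\ j, ~~ I j' k].

Lemma private_part_sub j k : j \in S -> private_part j k -> I j k.
Proof.
move=> jS /andP[kn /forall_inP priv]; have [j' j'S Ij'k] := I_cover kn.
have [<-//|j'j] := eqVneq j' j.
by move: (priv j'); rewrite !inE j'j j'S Ij'k => /(_ isT).
Qed.

Lemma private_part_convex j : j \in S -> convex_nat (private_part j).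
Proof.
move=> jS i k m /andP[ik km] privi privm.
have [/andP[_ /forall_inP privi'] /andP[mn /forall_inP privm']] := (privi, privm).
rewrite /private_part (ltn_trans km mn) /=; apply/forall_inP => j' j'_Sj.
have [j'j j'S] := setD1P j'_Sj.
have [notIi notIm] := (privi' j' j'_Sj, privm' j' j'_Sj).
apply/negP => Ij'k; apply: (I_irredundant jS j'S); first by rewrite eq_sym.
move=> x Ij'x.
have [Ii Im] := (private_part_sub jS privi, private_part_sub jS privm).
have ix : i < x.
  rewrite ltnNge; apply: contra notIi; rewrite leq_eqVlt => /predU1P[<-//|xi].
  by apply: (I_convex j'S _ Ij'x Ij'k); rewrite xi.
have xm : x < m.
  rewrite ltnNge; apply: contra notIm; rewrite leq_eqVlt => /predU1P[->//|mx].
  by apply: (I_convex j'S _ Ij'k Ij'x); rewrite km.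
by apply: (I_convex jS _ Ii Im); rewrite ix.
Qed.

End PrivatePart.

Section Walks.
Variables (V : finType) (adj : rel V).
Implicit Types (x y : V) (p q : seq V) (e : {set V}).

(* [nth x p k] is vertex [k.+1] of the walk [x :: p]. *)
Definition pedge (x : V) (p : seq V) (k : nat) : {set V} :=
  [set nth x (x :: p) k; nth x p k].

Lemma pedgesP x p e :
  reflect (exists2 k, k < size p & e = pedge x p k) (e \in pedges x p).
Proof.
have size_zip_p : size (zip (x :: p) p) = size p.
  by rewrite size_zip; apply/minn_idPr.
rewrite inE; apply: (iffP mapP) => [[a /(nthP (x, x))[k ltk <-] ->] | [k ltk ->]].
  by exists k; rewrite -?size_zip_p // nth_zip_cond ltk.
exists (nth (x, x) (zip (x :: p) p) k); first by rewrite mem_nth ?size_zip_p.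
by rewrite nth_zip_cond size_zip_p ltk.
Qed.

Lemma pedges_vertex x p e a : e \in pedges x p -> a \in e -> a \in x :: p.
Proof.
case/pedgesP=> k ltk -> /set2P[]->; first by rewrite mem_nth // ltnW.
by rewrite inE mem_nth ?orbT.
Qed.

Lemma pedges_cons x y p : pedges x (y :: p) = [set x; y] |: pedges y p.
Proof. by rewrite /pedges /= set_cons. Qed.

Lemma pedges_rcons x p y :
  pedges x (rcons p y) = pedges x p :|: [set [set last x p; y]].
Proof.
elim: p x => [|z p IHp] x; first by rewrite pedges_cons /pedges set_nil setU0 set0U.
by rewrite rcons_cons !pedges_cons IHp setUA.
Qed.

Lemma rev_lastI x p : last x p :: rev (belast x p) = rev (x :: p).
Proof. by rewrite -rev_rcons -lastI. Qed.

Lemma last_rev_belast x p : last (last x p) (rev (belast x p)) = x.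
Proof. by rewrite -[RHS](last_rcons x (rev p)) -rev_cons -rev_lastI. Qed.

Lemma pedges_rev x p : pedges (last x p) (rev (belast x p)) = pedges x p.
Proof.
elim: p x => [|y p IHp] x //=.
rewrite rev_cons pedges_rcons IHp last_rev_belast pedges_cons.
by rewrite setUC [[set y; x]]setUC.
Qed.

Lemma spath_rev x p :
  symmetric adj -> spath adj x p -> spath adj (last x p) (rev (belast x p)).
Proof.
move=> adj_sym /andP[xp uxp]; rewrite /spath rev_lastI rev_uniq uxp andbT.
by rewrite rev_path (eq_path (e' := adj)) // => a b; rewrite adj_sym.
Qed.

Lemma spath_prefix x p q : spath adj x (p ++ q) -> spath adj x p.
Proof.
by rewrite /spath cat_path -cat_cons cat_uniq => /andP[/andP[-> _] /andP[-> _]].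
Qed.

Lemma spath_cons x a p :
  spath adj x (a :: p) = [&& adj x a, x \notin a :: p & spath adj a p].
Proof. by rewrite /spath /= -!andbA; congr (_ && _); rewrite andbCA. Qed.

Lemma spath_slice x p m d (y := nth x (x :: p) m) (q := take d (drop m p)) :
  spath adj x p -> m + d <= size p ->
  [/\ spath adj y q, last y q = nth x (x :: p) (m + d), size q = d
    & forall k, k < d -> pedge y q k = pedge x p (m + k)].
Proof.
move=> /andP[xp uxp] le_md.
have le_mp : m <= size p by apply: leq_trans le_md; apply: leq_addr.
have yqE : y :: q = take d.+1 (drop m (x :: p)) by rewrite (drop_nth x).
have nthE i : i <= d -> nth y (y :: q) i = nth x (x :: p) (m + i).
  move=> le_id; rewrite yqE nth_take // nth_drop; apply: set_nth_default.
  by rewrite ltnS (leq_trans _ le_md) ?leq_add2l.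
have size_q : size q = d by rewrite size_takel // size_drop leq_subRL.
split=> //.
- apply/andP; rewrite -/(sorted adj (y :: q)) yqE.
  by rewrite take_sorted ?drop_sorted // take_uniq ?drop_uniq.
- by rewrite (last_nth y) size_q nthE.
move=> k ltk; rewrite /pedge nthE ?(ltnW ltk) //.
by rewrite -[nth y q k]/(nth y (y :: q) k.+1) nthE // addnS.
Qed.

End Walks.

Section Tree.
Variables (V : finType) (adj : rel V).
Hypotheses (adj_sym : symmetric adj) (Gtree : is_tree adj).
Implicit Types (x y z : V) (p q : seq V) (e : {set V}).

Lemma spath_last_neq x p : spath adj x p -> p != [::] -> last x p != x.
Proof.
case: p => // a p /andP[_ /andP[xap _]] _.
by apply: contraNneq xap => <-; apply: (mem_last a p).
Qed.

Lemma spath_unique x p q :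
  spath adj x p -> spath adj x q -> last x p = last x q -> p = q.
Proof.
elim: p x q => [|a p IHp] x q sp sq eq_last.
  case: q sq eq_last => // c q sq eq_last.
  by move: (spath_last_neq sq isT); rewrite -eq_last eqxx.
case: q sq eq_last => [|c q] sq eq_last.
  by move: (spath_last_neq sp isT); rewrite eq_last eqxx.
move: sp; rewrite spath_cons => /and3P[xa xap ap].
(* If [a] occurs in [q] after its head, the part of [q] up to [a] closes a
   cycle with the edge [x a]; if [a] does not occur in [q] at all, [p] and
   [x :: q] are two paths from [a] to the same end, so [x] would lie on [p]. *)
have [aq | naq] := boolP (a \in c :: q).
  case/splitPr: aq sq eq_last => [[|d q1] q2] sq eq_last.
    by rewrite (IHp a q2) //; move: sq; rewrite spath_cons => /and3P[].
  have cyc : spath adj x (rcons (d :: q1) a).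
    by apply: (spath_prefix (q := q2)); rewrite cat_rcons.
  have size_cyc : 2 <= size (rcons (d :: q1) a) by rewrite size_rcons.
  by move: (Gtree.2 x _ size_cyc cyc); rewrite last_rcons adj_sym xa.
have ax : a != x by apply: contraNneq xap => ->; exact: mem_head.
have a_xq : spath adj a (x :: c :: q).
  by rewrite spath_cons adj_sym xa in_cons negb_or ax naq.
by move: xap; rewrite (IHp a _ ap a_xq eq_last) in_cons mem_head orbT.
Qed.

Lemma tpath_edges_spath x p :
  spath adj x p -> tpath_edges adj x (last x p) = pedges x p.
Proof.
move=> sp; apply/setP => e; rewrite inE.
apply/asboolP/idP => [[q [sq [lq eq]]] | ep]; last by exists p.
by rewrite -(spath_unique sq sp lq).
Qed.

Lemma exists_spath x y : exists2 p, spath adj x p & last x p = y.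
Proof.
have /connectP[p xp ->] := Gtree.1 x y.
by case: (shortenP xp) => q xq uq _; exists q => //; apply/andP.
Qed.

Lemma tpath_edgesE x y :
  exists2 p, spath adj x p & tpath_edges adj x y = pedges x p.
Proof. by have [p sp <-] := exists_spath x y; exists p; rewrite ?tpath_edges_spath. Qed.

Lemma tpath_edgesC x y : tpath_edges adj x y = tpath_edges adj y x.
Proof.
have [p sp <-] := exists_spath x y.
have := tpath_edges_spath (spath_rev adj_sym sp).
by rewrite last_rev_belast pedges_rev tpath_edges_spath // => ->.
Qed.

Lemma Pl_pair a c : a != c -> Pl adj [set a; c] = tpath_edges adj a c.
Proof.
move=> ac; apply/setP => e; rewrite inE.
apply/asboolP/idP => [[a' [c' [a'c' [ac_eq ep]]]] | ep]; last by exists a, c.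
have a'_ac : a' \in [set a; c] by rewrite ac_eq set21.
have c'_ac : c' \in [set a; c] by rewrite ac_eq set22.
move: a'c' ep; case/set2P: a'_ac => ->; case/set2P: c'_ac => ->; rewrite ?eqxx //.
by rewrite tpath_edgesC.
Qed.

Lemma Pl_link (l : {set V}) :
  #|l| = 2 -> exists x p, spath adj x p /\ Pl adj l = pedges x p.
Proof.
move/eqP/cards2P=> [a [c [ac ->]]]; rewrite Pl_pair //.
by have [p sp ->] := tpath_edgesE a c; exists a, p.
Qed.

Lemma tpath_edges_nthP x p m m' e : spath adj x p -> m <= m' <= size p ->
  reflect (exists2 k, m <= k < m' & e = pedge x p k)
          (e \in tpath_edges adj (nth x (x :: p) m) (nth x (x :: p) m')).
Proof.
move=> sp /andP[le_mm' le_m'p].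
have le_m'p' : m + (m' - m) <= size p by rewrite subnKC.
have [sq lastq size_q pedgeq] := spath_slice sp le_m'p'.
rewrite subnKC // in lastq; rewrite -lastq tpath_edges_spath //.
apply: (iffP (pedgesP _ _ _)) => [[k] | [k /andP[le_mk lt_km'] ->]]; rewrite size_q.
  move=> ltk ->; exists (m + k); last by rewrite pedgeq.
  by rewrite leq_addr -ltn_subRL.
have lt_km'm : k - m < m' - m by rewrite ltn_sub2rE.
by exists (k - m); rewrite // pedgeq ?subnKC.
Qed.

Lemma tpath_edges_sub x p y z : spath adj x p -> y \in x :: p -> z \in x :: p ->
  tpath_edges adj y z \subset pedges x p.
Proof.
move=> sp; wlog le_yz : y z / index y (x :: p) <= index z (x :: p).
  move=> wlog_le yp zp.
  have [le|/ltnW le] := leqP (index y (x :: p)) (index z (x :: p)).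
    exact: wlog_le.
  by rewrite tpath_edgesC; apply: wlog_le.
move=> yp zp; have zpE : index z (x :: p) <= size p by rewrite -ltnS index_mem.
apply/subsetP => e; rewrite -(nth_index x yp) -(nth_index x zp).
case/(tpath_edges_nthP _ sp); first by rewrite le_yz.
by move=> k /andP[_ ltk] ->; apply/pedgesP; exists k => //; apply: leq_trans ltk zpE.
Qed.

Lemma pedges_convex x p y q i k j : spath adj x p -> spath adj y q ->
  i < k < j -> j < size p ->
  pedge x p i \in pedges y q -> pedge x p j \in pedges y q ->
  pedge x p k \in pedges y q.
Proof.
move=> sp sq /andP[ik kj] jp ei ej.
have a_yq : nth x (x :: p) i.+1 \in y :: q.
  by apply: pedges_vertex ei _; exact: set22.
have c_yq : nth x (x :: p) j \in y :: q.
  by apply: pedges_vertex ej _; exact: set21.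
apply: (subsetP (tpath_edges_sub sq a_yq c_yq)); apply/(tpath_edges_nthP _ sp).
  by rewrite (leq_trans ik (ltnW kj)) ltnW.
by exists k => //; rewrite ik kj.
Qed.

Section MinimalCover.
Variables (t : V) (s : seq V) (Fu : {set {set V}}).
Hypotheses (ts_spath : spath adj t s) (Fu_links : forall l, l \in Fu -> #|l| = 2).
Hypothesis Fu_cov : pedges t s \subset coverL adj Fu.
Hypothesis Fu_min :
  forall H : {set {set V}}, H \proper Fu -> ~~ (pedges t s \subset coverL adj H).

Definition covers (l : {set V}) : pred nat :=
  fun k => (k < size s) && (pedge t s k \in Pl adj l).

Definition private_edges (l : {set V}) := pedges t s :\: coverL adj (Fu :\ l).

Lemma covers_convex l : l \in Fu -> convex_nat (covers l).
Proof.
move=> /Fu_links/Pl_link[y [q [sq Pl_l]]] i k j ikj /andP[_ ei] /andP[js ej].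
rewrite Pl_l in ei ej; rewrite /covers Pl_l (pedges_convex ts_spath sq ikj js ei ej).
by case/andP: ikj => _ /ltn_trans->.
Qed.

Lemma covers_cover k : k < size s -> exists2 l, l \in Fu & covers l k.
Proof.
move=> ks; have /bigcupP[l lFu el] : pedge t s k \in coverL adj Fu.
  by apply: (subsetP Fu_cov); apply/pedgesP; exists k.
by exists l; rewrite // /covers ks.
Qed.

Lemma covers_irredundant l l' :
  l \in Fu -> l' \in Fu -> l != l' -> ~ {subset covers l' <= covers l}.
Proof.
move=> lFu l'Fu ll' sub; apply: (negP (Fu_min (properD1 l'Fu))).
apply/subsetP => e /pedgesP[k ks ->]; have [m mFu mk] := covers_cover ks.
apply/bigcupP; have [eq_ml' | ne_ml'] := eqVneq m l'.
  exists l; first by rewrite in_setD1 ll'.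
  by rewrite -eq_ml' in sub; case/andP: (sub k mk).
by exists m; rewrite ?in_setD1 ?ne_ml' //; case/andP: mk.
Qed.

Lemma private_edgesP l e :
  reflect (exists2 k, private_part Fu (size s) covers l k & e = pedge t s k)
          (e \in private_edges l).
Proof.
rewrite inE andbC; apply: (iffP andP) => [[/pedgesP[k ks ->] ncov] | ].
  exists k => //; rewrite /private_part ks; apply/forall_inP => l' l'_Fu.
  by apply: contra ncov => /andP[_ el']; apply/bigcupP; exists l'.
move=> [k /andP[ks /forall_inP priv] ->]; split; first by apply/pedgesP; exists k.
by apply/bigcupP => -[l' /priv]; rewrite /covers ks => /negP.
Qed.

Theorem private_edges_spath l : l \in Fu ->
  private_edges l != set0 /\
  exists x p, spath adj x p /\ private_edges l = pedges x p.
Proof.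
move=> lFu; have priv_neq0 : private_edges l != set0.
  by rewrite setD_eq0; apply: Fu_min; apply: properD1.
split=> //.
have conv := private_part_convex covers_convex covers_cover covers_irredundant lFu.
have [e /private_edgesP[k0 priv_k0 _]] := set0Pn _ priv_neq0.
have [lo [hi [le_lohi hi_s privE]]] :
    exists lo hi, [/\ lo <= hi, hi < size s
      & forall k, private_part Fu (size s) covers l k = (lo <= k <= hi)].
  by apply: convex_nat_interval conv _ _; [move=> k /andP[] | exists k0].
have [p sp tpathE] := tpath_edgesE (nth t (t :: s) lo) (nth t (t :: s) hi.+1).
exists (nth t (t :: s) lo), p; split=> //; rewrite -tpathE.
apply/setP => e'; apply/private_edgesP/(tpath_edges_nthP _ ts_spath).
  by rewrite ltnW ?ltnS.
- by case=> k; rewrite privE => bnd ->; exists k; rewrite ?ltnS.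
- by case=> k; rewrite ltnS -privE => bnd ->; exists k.
Qed.

End MinimalCover.

End Tree.

Theorem lemma7 (R : realFieldType) (V : finType) (adj : rel V) (r : V)
    (L F : {set {set V}}) (w : {set V} -> R)
    (adj_sym : symmetric adj) (adj_irr : irreflexive adj)
    (Gtree : is_tree adj)
    (L_links : forall l, l \in L -> #|l| = 2)
    (w_pos : forall l, l \in L -> (0 < w l)%R)
    (F_sub : F \subset L)
    (F_sol : coverL adj F = edgesG adj)
    (u : {set V}) (t b : V)
    (u_L : u \in L) (u_up : is_uplink adj r u t b)
    (vu : V)
    (vu_anc : anc adj r vu t)
    (vu_cov : Pl adj u \subset coverL adj (Bset adj r F vu))
    (vu_far : forall v', anc adj r v' t ->
        Pl adj u \subset coverL adj (Bset adj r F v') -> dist adj r v' <= dist adj r vu)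
    (Fu : {set {set V}})
    (Fu_sub : Fu \subset Bset adj r F vu)
    (Fu_cov : Pl adj u \subset coverL adj Fu)
    (Fu_min : forall H : {set {set V}}, H \proper Fu -> ~~ (Pl adj u \subset coverL adj H))
    (l : {set V}) (l_Fu : l \in Fu) :
  Pul adj Fu u l != set0 /\
  exists (x : V) (p : seq V), spath adj x p /\ Pul adj Fu u l = pedges x p.
Proof.
have [t_neq_b [u_tb _]] := u_up.
have [s ts_spath tpath_tb] := tpath_edgesE adj_sym Gtree t b.
have Pl_u : Pl adj u = pedges t s by rewrite u_tb Pl_pair.
have Fu_links l' : l' \in Fu -> #|l'| = 2.
  by move/(subsetP Fu_sub); rewrite inE => /andP[/(subsetP F_sub)/L_links].
have Fu_cov' : pedges t s \subset coverL adj Fu by rewrite -Pl_u.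
have Fu_min' (H : {set {set V}}) : H \proper Fu -> ~~ (pedges t s \subset coverL adj H).
  by rewrite -Pl_u; apply: Fu_min.
have -> : Pul adj Fu u l = private_edges adj t s Fu l by rewrite /Pul Pl_u.
exact: (private_edges_spath adj_sym Gtree ts_spath Fu_links Fu_cov' Fu_min').
Qed.
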